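(* Let $d,n\ge1$, $L\ge0$, let $p_x,p_w$ be distributions on $\mathbb{R}^d$, let $x^{(1)},\dots,x^{(n+1)}$ be i.i.d. from $p_x$, $w_\star\sim p_w$, and $y^{(i)}=\langle w_\star,x^{(i)}\rangle$ for $i=1,\dots,n+1$. Let $$Z_0=\begin{bmatrix} x^{(1)} & \cdots & x^{(n)} & x^{(n+1)}\\ y^{(1)} & \cdots & y^{(n)} & 0\end{bmatrix},\qquad \bar Z_0=\begin{bmatrix} x^{(1)} & \cdots & x^{(n)} & x^{(n+1)}\\ y^{(1)} & \cdots & y^{(n)} & y^{(n+1)}\end{bmatrix},$$ and $M=\begin{bmatrix} I_n & 0\\ 0& 0\end{bmatrix}\in\mathbb{R}^{(n+1)\times(n+1)}$. For matrices $A_i,B_i\in\mathbb{R}^{d\times d}$ with $A_i$ symmetric ($i=0,\dots,L-1$), let $P_i=\begin{bmatrix}B_i&0\\0&1\end{bmatrix}$, $Q_i=\begin{bmatrix}A_i&0\\0&0\end{bmatrix}$, and define $Z_{i+1}=Z_i+\frac1nP_iZ_iM(Z_i^\top Q_iZ_i)$ and $\bar Z_{i+1}=\bar Z_i+\frac1nP_i\bar Z_iM(\bar Z_i^\top Q_i\bar Z_i)$. Let $\bar Y_L\in\mathbb{R}^{1\times(n+1)}$ be the last row of $\bar Z_L$. Then (assuming the expectations are finite) $$\mathbb{E}\Big[\big([Z_L]_{d+1,n+1}+w_\star^\top x^{(n+1)}\big)^2\Big]=\mathbb{E}\Big[\mathrm{Tr}\big((I-M)\bar Y_L^\top\bar 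Y_L(I-M)\big)\Big].$$
   Context: $[X]_{i,j}$ denotes the $(i,j)$ entry of a matrix; $I=I_{n+1}$. *)

From HB Require Import structures.
From mathcomp Require Import all_boot all_order all_algebra.
From mathcomp Require Import all_classical all_reals all_analysis.
Set Implicit Arguments. Unset Strict Implicit. Unset Printing Implicit Defensive.
Import Order.TTheory GRing.Theory Num.Theory.
Local Open Scope ring_scope.
Local Open Scope classical_set_scope.

Definition mutually_independent {d dV} {T : measurableType d}
  {V : measurableType dV} {R : realType} (P : probability T R)
  {I : finType} (X : I -> T -> V) : Prop :=
  forall (J : {set I}) (A : I -> set V),
    (forall j, j \in J -> measurable (A j)) ->
    P (\bigcap_(j in [set j | j \in J]) (X j @^-1` A j)) =
    (\prod_(j in J) P (X j @^-1` A j))%E.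

Definition has_law {d dV} {T : measurableType d} {V : measurableType dV}
  {R : realType} (P : probability T R) (X : T -> V) (mu : probability V R) :=
  forall A : set V, measurable A -> P (X @^-1` A) = mu A.

Definition tvec {R : realType} {d : nat} (v : d.-tuple R) : 'cV[R]_d :=
  \col_k tnth v k.

Definition inner {R : realType} {d : nat} (w x : 'cV[R]_d) : R :=
  \sum_(k < d) w k 0 * x k 0.

Definition Mmask {R : realType} (n : nat) : 'M[R]_(n + 1) :=
  block_mx 1%:M 0 0 0.

Definition Pmat {R : realType} {d : nat} (B : 'M[R]_d) : 'M[R]_(d + 1) :=
  block_mx B 0 0 1%:M.
Definition Qmat {R : realType} {d : nat} (A : 'M[R]_d) : 'M[R]_(d + 1) :=
  block_mx A 0 0 0.

Fixpoint iterZ {R : realType} {d n : nat} (A B : nat -> 'M[R]_d)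
  (Z0 : 'M[R]_(d + 1, n + 1)) (i : nat) : 'M[R]_(d + 1, n + 1) :=
  match i with
  | 0 => Z0
  | i'.+1 =>
      let Z := iterZ A B Z0 i' in
      Z + n%:R^-1 *: (Pmat (B i') *m Z *m Mmask n *m (Z^T *m Qmat (A i') *m Z))
  end.

Definition datamx {R : realType} {d n : nat} (x : 'I_(n + 1) -> 'cV[R]_d)
  (y : 'I_(n + 1) -> R) (ylast : R) : 'M[R]_(d + 1, n + 1) :=
  block_mx (\matrix_(k < d, j < n) x (lshift 1 j) k 0)
           (x (rshift n ord0))
           (\row_(j < n) y (lshift 1 j))
           (ylast%:M).

From HB Require Import structures.
From mathcomp Require Import all_boot all_order all_algebra.
From mathcomp Require Import all_classical all_reals all_analysis.
Import Order.TTheory GRing.Theory Num.Theory.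
Local Open Scope ring_scope.

(* The two data matrices differ only by y^(n+1) in the bottom-right corner.
   That corner is killed by M on the right and by Q_i on either side, so it
   passes unchanged through every layer: Zbar_L = Z_L + y^(n+1) E, with E the
   corner unit matrix.  As I - M = E, the trace on the right is the square of
   the corner entry of Zbar_L, i.e. of [Z_L]_{d+1,n+1} + y^(n+1).  The two
   integrands are therefore equal pointwise. *)

Section CornerMatrix.
Variable R : pzRingType.

Definition corner_mx {m n : nat} (c : R) : 'M[R]_(m + 1, n + 1) :=
  block_mx 0 0 0 c%:M.

Lemma corner_mxE {m n : nat} (c : R) :
  @corner_mx m n c (rshift m ord0) (rshift n ord0) = c.
Proof. by rewrite block_mxEdr mxE eqxx mulr1n. Qed.

Lemma mxtrace_corner_conj {n : nat} (C : 'M[R]_(n + 1)) :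
  \tr (@corner_mx n n 1 *m C *m @corner_mx n n 1)
  = C (rshift n ord0) (rshift n ord0).
Proof.
rewrite -(submxK C) /corner_mx !mulmx_block.
rewrite !(mul0mx, mulmx0, add0r, addr0, mul1mx, mulmx1).
by rewrite mxtrace_block mxtrace0 add0r trace_mx11 block_mxEdr.
Qed.

End CornerMatrix.

Arguments corner_mx {R m n} c.

Lemma gram_row_diag (R : comPzRingType) (n : nat) (Y : 'rV[R]_n) (j : 'I_n) :
  (Y^T *m Y) j j = Y 0 j ^+ 2.
Proof. by rewrite mxE big_ord1 !mxE expr2. Qed.

Lemma inner_mulmx (R : realType) (d : nat) (w x : 'cV[R]_d) :
  inner w x = (w^T *m x) 0 0.
Proof. by rewrite mxE; apply: eq_bigr => k _; rewrite mxE. Qed.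

Section CornerInvariance.
Variables (R : realType) (d n : nat).

Lemma subr1_Mmask : 1%:M - Mmask n = @corner_mx R n n 1.
Proof.
by rewrite /Mmask (scalar_mx_block n 1) opp_block_mx add_block_mx
  !subrr !oppr0 !addr0.
Qed.

Lemma mul_corner_Mmask (c : R) : @corner_mx _ d n c *m Mmask n = 0.
Proof.
by rewrite /corner_mx /Mmask mulmx_block !(mul0mx, mulmx0, addr0) block_mx0.
Qed.

Lemma mul_Qmat_corner (Q : 'M[R]_d) (c : R) : Qmat Q *m @corner_mx _ d n c = 0.
Proof.
by rewrite /corner_mx /Qmat mulmx_block !(mul0mx, mulmx0, addr0) block_mx0.
Qed.

Lemma mul_tr_corner_Qmat (Q : 'M[R]_d) (c : R) :
  (@corner_mx _ d n c)^T *m Qmat Q = 0.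
Proof.
by rewrite /corner_mx /Qmat tr_block_mx mulmx_block !trmx0
  !(mul0mx, mulmx0, addr0) block_mx0.
Qed.

Lemma iterZD_corner (A B : nat -> 'M[R]_d) (Z : 'M[R]_(d + 1, n + 1)) c i :
  iterZ A B (Z + corner_mx c) i = iterZ A B Z i + corner_mx c.
Proof.
elim: i => [//|i IH] /=; rewrite IH; set Zi := iterZ A B Z i.
have -> : Pmat (B i) *m (Zi + corner_mx c) *m Mmask n
          = Pmat (B i) *m Zi *m Mmask n.
  by rewrite mulmxDr mulmxDl -(mulmxA _ (corner_mx c)) mul_corner_Mmask
    mulmx0 addr0.
have -> : (Zi + corner_mx c)^T *m Qmat (A i) *m (Zi + corner_mx c)
          = Zi^T *m Qmat (A i) *m Zi.
  rewrite mulmxDr -(mulmxA _ _ (corner_mx c)) mul_Qmat_corner mulmx0 addr0.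
  by rewrite (raddfD (@trmx R _ _)) !mulmxDl mul_tr_corner_Qmat mul0mx addr0.
by rewrite addrAC.
Qed.

Lemma datamx_corner (x : 'I_(n + 1) -> 'cV[R]_d) (y : 'I_(n + 1) -> R) c :
  datamx x y c = datamx x y 0 + corner_mx c.
Proof.
by rewrite /datamx /corner_mx add_block_mx !addr0 (raddf0 (@scalar_mx R 1))
  add0r.
Qed.

End CornerInvariance.

Theorem lemma5 (R : realType) (dT : measure_display) (T : measurableType dT)
  (Pr : probability T R) (d n L : nat) (hd : (1 <= d)%N) (hn : (1 <= n)%N)
  (px pw : probability (d.-tuple R) R)
  (X : 'I_(n + 1) -> T -> d.-tuple R) (W : T -> d.-tuple R)
  (A B : nat -> 'M[R]_d) :
  (forall i, measurable_fun setT (X i)) ->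
  measurable_fun setT W ->
  mutually_independent Pr
    (fun o : option 'I_(n + 1) => match o with Some i => X i | None => W end) ->
  (forall i, has_law Pr (X i) px) ->
  has_law Pr W pw ->
  (forall i, (i < L)%N -> (A i)^T = A i) ->
  let x := fun i w => tvec (X i w) in
  let wstar := fun w => tvec (W w) in
  let y := fun i w => inner (wstar w) (x i w) in
  let nlast := rshift n (@ord0 0) in
  let dlast := rshift d (@ord0 0) in
  let Z0 := fun w => datamx (x ^~ w) (y ^~ w) 0 in
  let Zb0 := fun w => datamx (x ^~ w) (y ^~ w) (y nlast w) in
  let ZL := fun w => iterZ A B (Z0 w) L in
  let YbL := fun w => dsubmx (iterZ A B (Zb0 w) L) in
  let lhs := fun w => (ZL w dlast nlast + ((wstar w)^T *m x nlast w) ord0 ord0) ^+ 2 in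
  let rhs := fun w => \tr ((1%:M - Mmask n) *m ((YbL w)^T *m YbL w) *m (1%:M - Mmask n)) in
  Pr.-integrable setT (EFin \o lhs) ->
  Pr.-integrable setT (EFin \o rhs) ->
  ('E_Pr[lhs] = 'E_Pr[rhs])%E.
Proof.
move=> _ _ _ _ _ _ x wstar y nlast dlast Z0 Zb0 ZL YbL lhs rhs _ _.
suff -> : lhs = rhs by [].
apply/funext => w.
have ZbL_corner : iterZ A B (Zb0 w) L = ZL w + corner_mx (y nlast w).
  by rewrite /Zb0 datamx_corner iterZD_corner.
rewrite /rhs subr1_Mmask mxtrace_corner_conj gram_row_diag /YbL ZbL_corner.
by rewrite mxE mxE corner_mxE /y inner_mulmx.
Qed.
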